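(* Let $X$ be an absolutely continuous real random variable, symmetric and unimodal about $0$, whose cdf $F_X$ is $C^1$ with density $g=F_X'$, and let $\beta\in(0,1]$. Assume that $g(t+\lambda_t^\beta)g(t-\lambda_t^\beta)>0$ and $$g(t)\ge2\frac{g(t+\lambda_t^\beta)\,g(t-\lambda_t^\beta)}{g(t+\lambda_t^\beta)+g(t-\lambda_t^\beta)}\quad\text{for all }t\in\mathbb{R}.$$ Then $t\mapsto LD_S^\beta(t,F_X)$ is non-increasing on $t>0$ and non-decreasing on $t<0$.
   Context: $\lambda_t^\beta=\inf\{\lambda>0: F_X(t+\lambda)-F_X(t-\lambda)\ge\beta\}$ and $LD_S^\beta(t,F_X)=\frac{2}{\beta^2}\big(F_X(t+\lambda_t^\beta)-F_X(t)\big)\big(F_X(t)-F_X(t-\lambda_t^\beta)\big)$. Symmetric and unimodal about $0$ means $g(-s)=g(s)$ and $g$ is nonincreasing on $[0,\infty)$. *)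

From Stdlib Require Import Reals.
From Coquelicot Require Import Coquelicot.
Open Scope R_scope.

(* lambda_t^beta = inf { l > 0 : F(t+l) - F(t-l) >= beta }.
   The set is bounded below by 0; Glb_Rbar returns p_infty if the set is empty,
   in which case [real] gives 0 (convention). *)
Definition lambda_beta (F : R -> R) (beta t : R) : R :=
  real (Glb_Rbar (fun l => 0 < l /\ F (t + l) - F (t - l) >= beta)).

Definition LD_S (beta t : R) (F : R -> R) : R :=
  let l := lambda_beta F beta t in
  2 / (beta ^ 2) * ((F (t + l) - F t) * (F t - F (t - l))).

(* Write A(t) = F(t + λ_t) - F(t)  ([upper_mass]).  For β < 1, λ_t is the positive root of
   F(t + λ) - F(t - λ) = β, so F(t) - F(t - λ_t) = β - A(t) and
   LD_S^β(t) = (2/β²) A(t) (β - A(t)).  Differentiating the level identity gives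
   A'(t) = H(t) - g(t), where H(t) is the harmonic mean of g(t ± λ_t), so the
   hypothesis makes A nonincreasing.  Symmetry and unimodality of g give
   A(t) <= β/2 for t >= 0 and A(t) >= β/2 for t <= 0, and x ↦ x (β - x) increases
   below β/2 and decreases above it.  For β = 1 the set defining λ_t is empty,
   λ_t = 0 by convention and LD_S^1 vanishes identically. *)

From Stdlib Require Import Reals Lra.
From Coquelicot Require Import Coquelicot.
Open Scope R_scope.

Definition slope (f : R -> R) (x h : R) : R := (f (x + h) - f x) / h.

Lemma is_derive_slope (f : R -> R) (x l : R) :
  is_derive f x l <-> is_lim (slope f x) 0 l.
Proof.
  rewrite is_derive_Reals, <- is_lim_spec.
  split.
  - intros Hf eps.
    destruct (Hf eps (cond_pos eps)) as [d Hd].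
    exists d; intros h Hh Hh0.
    apply Hd; [exact Hh0|].
    change (Rabs (h - 0) < d) in Hh; rewrite Rminus_0_r in Hh; exact Hh.
  - intros Hf eps Heps.
    destruct (Hf (mkposreal eps Heps)) as [d Hd].
    exists d; intros h Hh0 Hh.
    apply Hd; [|exact Hh0].
    change (Rabs (h - 0) < d); rewrite Rminus_0_r; exact Hh.
Qed.

Lemma slope_mul (f : R -> R) (x h : R) : h <> 0 -> slope f x h * h = f (x + h) - f x.
Proof. intros Hh; unfold slope; field; exact Hh. Qed.

Lemma is_lim_slope_comp (f : R -> R) (x l : R) (k : R -> R) :
  is_derive f x l -> is_lim k 0 0 -> (forall h, h <> 0 -> k h <> 0) ->
  is_lim (fun h => slope f x (k h)) 0 l.
Proof.
  intros Hf Hk Hk0.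
  apply (is_lim_comp (slope f x) k 0 l 0); [apply is_derive_slope, Hf | exact Hk |].
  exists (mkposreal 1 Rlt_0_1); intros h _ Hh E; injection E; apply Hk0, Hh.
Qed.

Lemma is_derive_comp_affine (f : R -> R) (t s x l : R) :
  is_derive f (t + s * x) l -> is_derive (fun y => f (t + s * y)) x (s * l).
Proof.
  intros Hd.
  apply (is_derive_comp f (fun y => t + s * y) x l s Hd).
  auto_derive; [exact I | ring].
Qed.

Lemma is_derive_reflected_sum (f df : R -> R) (t x : R) :
  (forall y, is_derive f y (df y)) ->
  is_derive (fun y => f (t + y) + f (t - y)) x (df (t + x) - df (t - x)).
Proof.
  intros f_deriv.
  apply (is_derive_ext (fun y => f (t + 1 * y) + f (t + -1 * y))).
  { intros y; f_equal; f_equal; ring. }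
  replace (df (t + x) - df (t - x)) with (1 * df (t + 1 * x) + -1 * df (t + -1 * x))
    by (replace (t + 1 * x) with (t + x) by ring;
        replace (t + -1 * x) with (t - x) by ring; ring).
  apply (is_derive_plus (fun y => f (t + 1 * y)) (fun y => f (t + -1 * y)));
    apply is_derive_comp_affine, f_deriv.
Qed.

Lemma is_derive_nonpos_le (f df : R -> R) (a b : R) : a <= b ->
  (forall x, a <= x <= b -> is_derive f x (df x)) ->
  (forall x, a <= x <= b -> df x <= 0) -> f b <= f a.
Proof.
  intros Hab Hd Hneg.
  destruct (MVT_gen f a b df) as [c [Hc Hfc]].
  - intros x Hx; apply Hd; rewrite Rmin_left, Rmax_right in Hx; lra.
  - intros x Hx; apply derivable_continuous_pt.
    exists (df x); apply is_derive_Reals, Hd; rewrite Rmin_left, Rmax_right in Hx; lra.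
  - rewrite Rmin_left, Rmax_right in Hc by lra.
    specialize (Hneg c Hc); nra.
Qed.

Lemma is_derive_nonneg_le (f df : R -> R) (a b : R) : a <= b ->
  (forall x, a <= x <= b -> is_derive f x (df x)) ->
  (forall x, a <= x <= b -> 0 <= df x) -> f a <= f b.
Proof.
  intros Hab Hd Hpos.
  enough (- f b <= - f a) by lra.
  apply (is_derive_nonpos_le (fun x => - f x) (fun x => - df x)); [exact Hab| |].
  - intros x Hx; apply (is_derive_opp f), Hd, Hx.
  - intros x Hx; specialize (Hpos x Hx); lra.
Qed.

Lemma strict_incr_of_is_derive_pos (f df : R -> R) :
  (forall x, is_derive f x (df x)) -> (forall x, 0 < df x) ->
  forall x y, x < y -> f x < f y.
Proof.
  intros Hd Hpos x y Hxy.
  apply (incr_function_le f m_infty p_infty df); simpl; auto.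
  intros u _ _; apply Rlt_gt, Hpos.
Qed.

Lemma is_derive_nonneg_of_incr (f : R -> R) (x l : R) :
  (forall u v, u <= v -> f u <= f v) -> is_derive f x l -> 0 <= l.
Proof.
  intros Hmono Hd.
  apply is_derive_slope in Hd.
  apply (is_lim_le_loc (fun _ => 0) (slope f x) 0 0 l); [|apply is_lim_const|exact Hd].
  exists (mkposreal 1 Rlt_0_1); intros h _ Hh; unfold slope.
  destruct (Rlt_or_le 0 h).
  - apply Rdiv_le_0_compat; [|lra].
    enough (f x <= f (x + h)) by lra. apply Hmono; lra.
  - assert (f (x + h) <= f x) by (apply Hmono; lra).
    replace ((f (x + h) - f x) / h) with ((f x - f (x + h)) / - h) by (field; lra).
    apply Rdiv_le_0_compat; lra.
Qed.

Lemma is_lim_0_of_linear_bound (k : R -> R) (C : R) :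
  (forall y, Rabs (k y) <= C * Rabs y) -> is_lim k 0 0.
Proof.
  intros Hk; apply is_lim_spec; intros eps.
  assert (HC : 0 <= C) by (specialize (Hk 1); rewrite Rabs_R1 in Hk;
                           pose proof (Rabs_pos (k 1)); lra).
  assert (Hd : 0 < eps / (C + 1)) by (apply Rdiv_lt_0_compat; [apply cond_pos|lra]).
  exists (mkposreal _ Hd); intros y Hy _.
  change (Rabs (y - 0) < eps / (C + 1)) in Hy.
  rewrite Rminus_0_r in Hy |- *.
  apply (Rle_lt_trans _ (C * Rabs y)); [apply Hk|].
  apply (Rle_lt_trans _ ((C + 1) * Rabs y)); [pose proof (Rabs_pos y); nra|].
  apply (Rmult_lt_reg_r (/ (C + 1))); [apply Rinv_0_lt_compat; lra|].
  replace ((C + 1) * Rabs y * / (C + 1)) with (Rabs y) by (field; lra).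
  exact Hy.
Qed.

Lemma Rabs_le_Rabs_plus (x y : R) : 0 <= x * y -> Rabs x <= Rabs (x + y).
Proof. intros Hxy; split_Rabs; nra. Qed.

Definition harmonic_mean (a b : R) : R := 2 * (a * b) / (a + b).

Lemma harmonic_mean_split (q1 q2 k1 k2 h : R) :
  0 < q1 -> 0 < q2 -> h <> 0 -> q1 * k1 = q2 * k2 -> k1 + k2 = 2 * h ->
  q1 * k1 / h = harmonic_mean q1 q2.
Proof.
  intros Hq1 Hq2 Hh Hk Hsum; unfold harmonic_mean.
  assert (Hk1 : k1 = 2 * h * q2 / (q1 + q2)).
  { apply (Rmult_eq_reg_r (q1 + q2)); [|lra]. field_simplify; [nra|lra]. }
  rewrite Hk1; field; lra.
Qed.

Lemma is_lim_harmonic_mean (f1 f2 : R -> R) (x : Rbar) (l1 l2 : R) :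
  is_lim f1 x l1 -> is_lim f2 x l2 -> l1 + l2 <> 0 ->
  is_lim (fun y => harmonic_mean (f1 y) (f2 y)) x (harmonic_mean l1 l2).
Proof.
  intros H1 H2 Hl; unfold harmonic_mean.
  apply (is_lim_div _ _ _ (2 * (l1 * l2)) (l1 + l2)).
  - apply (is_lim_mult _ _ _ 2 (l1 * l2)); [apply is_lim_const| |exact I].
    apply (is_lim_mult _ _ _ l1 l2); [exact H1|exact H2|exact I].
  - apply (is_lim_plus _ _ _ l1 l2); [exact H1|exact H2|reflexivity].
  - intros E; injection E; exact Hl.
  - exact I.
Qed.

Section StrictlyIncreasing.

Variable F : R -> R.
Hypothesis F_strict : forall x y, x < y -> F x < F y.

Lemma slope_pos (x h : R) : h <> 0 -> 0 < slope F x h.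
Proof.
  intros Hh; unfold slope.
  destruct (Rlt_or_le 0 h) as [Hh0|Hh0].
  - pose proof (F_strict x (x + h)); apply Rdiv_lt_0_compat; lra.
  - pose proof (F_strict (x + h) x).
    replace ((F (x + h) - F x) / h) with ((F x - F (x + h)) / - h) by (field; lra).
    apply Rdiv_lt_0_compat; lra.
Qed.

Lemma equal_increments_same_sign (a b x y : R) :
  F (a + x) - F a = F (b + y) - F b -> 0 < x * y \/ (x = 0 /\ y = 0).
Proof.
  intros Hinc.
  destruct (Rtotal_order x 0) as [Hx|[Hx|Hx]];
    destruct (Rtotal_order y 0) as [Hy|[Hy|Hy]];
    subst; rewrite ?Rplus_0_r in Hinc; try (left; nra); try (right; lra).
  all: exfalso.
  - pose proof (F_strict (a + x) a); lra.
  - pose proof (F_strict (a + x) a); pose proof (F_strict b (b + y)); lra.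
  - pose proof (F_strict (b + y) b); lra.
  - pose proof (F_strict b (b + y)); lra.
  - pose proof (F_strict a (a + x)); pose proof (F_strict (b + y) b); lra.
  - pose proof (F_strict a (a + x)); lra.
Qed.

Lemma equal_increments_split (a b x y h : R) :
  F (a + x) - F a = F (b + y) - F b -> x + y = 2 * h ->
  (h <> 0 -> x <> 0 /\ y <> 0) /\ Rabs x <= 2 * Rabs h /\ Rabs y <= 2 * Rabs h.
Proof.
  intros Hinc Hsum.
  assert (Hxy : 0 < x * y \/ (x = 0 /\ y = 0))
    by exact (equal_increments_same_sign a b x y Hinc).
  replace (2 * Rabs h) with (Rabs (x + y)) by (rewrite Hsum, Rabs_mult, Rabs_pos_eq; lra).
  assert (0 <= x * y) by (destruct Hxy as [|[-> ->]]; lra).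
  split; [|split; [|rewrite Rplus_comm]; apply Rabs_le_Rabs_plus; lra].
  intros Hh; destruct Hxy as [Hxy|]; [|lra].
  split; intros E; rewrite E in Hxy; lra.
Qed.

End StrictlyIncreasing.

Section LevelCurve.

Variables (F g lam : R -> R) (c : R).
Hypothesis F_deriv : forall x, is_derive F x (g x).
Hypothesis g_pos : forall x, 0 < g x.
Hypothesis lam_level : forall t, F (t + lam t) - F (t - lam t) = c.

(* No regularity of [lam] is needed.  When t moves by h, the endpoints
   a = t + lam t and b = t - lam t move by k1, k2 with k1 + k2 = 2h and
   F(a + k1) - F(a) = F(b + k2) - F(b).  Hence |k1|, |k2| <= 2|h|, and the
   difference quotient is the harmonic mean of the slopes of F at a, b over
   k1, k2, minus the slope at t over h. *)
Lemma is_derive_upper_increment (t : R) :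
  is_derive (fun s => F (s + lam s) - F s) t
    (harmonic_mean (g (t + lam t)) (g (t - lam t)) - g t).
Proof.
  pose proof (strict_incr_of_is_derive_pos F g F_deriv g_pos) as F_strict.
  set (a := t + lam t); set (b := t - lam t).
  set (k1 := fun h => h + (lam (t + h) - lam t)).
  set (k2 := fun h => h - (lam (t + h) - lam t)).
  assert (Ha : forall h, a + k1 h = t + h + lam (t + h)) by (intros; unfold a, k1; ring).
  assert (Hb : forall h, b + k2 h = t + h - lam (t + h)) by (intros; unfold b, k2; ring).
  assert (k_sum : forall h, k1 h + k2 h = 2 * h) by (intros; unfold k1, k2; ring).
  assert (k_incr : forall h, F (a + k1 h) - F a = F (b + k2 h) - F b).
  { intros h; rewrite Ha, Hb.
    pose proof (lam_level t) as Hlevel_t; pose proof (lam_level (t + h)).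
    fold a b in Hlevel_t; lra. }
  assert (k_split : forall h, (h <> 0 -> k1 h <> 0 /\ k2 h <> 0) /\
                              Rabs (k1 h) <= 2 * Rabs h /\ Rabs (k2 h) <= 2 * Rabs h)
    by (intros h; apply (equal_increments_split F F_strict a b); [apply k_incr | apply k_sum]).
  assert (k_lim : is_lim k1 0 0 /\ is_lim k2 0 0)
    by (split; apply (is_lim_0_of_linear_bound _ 2); intros h; apply k_split).
  apply is_derive_slope.
  apply (is_lim_ext_loc (fun h => harmonic_mean (slope F a (k1 h)) (slope F b (k2 h))
                                  - slope F t h)).
  - exists (mkposreal 1 Rlt_0_1); intros h _ Hh.
    destruct (proj1 (k_split h) Hh) as [Hk1 Hk2].
    rewrite <- (harmonic_mean_split _ _ (k1 h) (k2 h) h); try apply slope_pos; auto.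
    + rewrite slope_mul, Ha by exact Hk1; unfold slope, a; field; exact Hh.
    + rewrite !slope_mul by assumption; apply k_incr.
  - apply (is_lim_minus _ _ _ (harmonic_mean (g a) (g b)) (g t)).
    + apply is_lim_harmonic_mean.
      * apply is_lim_slope_comp; [apply F_deriv | apply k_lim | apply k_split].
      * apply is_lim_slope_comp; [apply F_deriv | apply k_lim | apply k_split].
      * pose proof (g_pos a); pose proof (g_pos b); lra.
    + apply (is_lim_slope_comp F t (g t) (fun h => h)); [apply F_deriv | apply is_lim_id | auto].
    + reflexivity.
Qed.

End LevelCurve.

Lemma is_glb_Rbar_level_set (G : R -> R) (c r : R) :
  (forall x y, x < y -> G x < G y) -> 0 < r -> G r = c ->
  is_glb_Rbar (fun l => 0 < l /\ G l >= c) r.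
Proof.
  intros HG Hr HGr; split.
  - intros l [_ Hl]; simpl.
    destruct (Rlt_or_le l r) as [Hlr|]; [|assumption].
    specialize (HG l r Hlr); lra.
  - intros b Hb; apply Hb; split; [exact Hr | lra].
Qed.

Lemma lambda_beta_nonneg (F : R -> R) (beta t : R) : 0 <= lambda_beta F beta t.
Proof.
  unfold lambda_beta.
  destruct (Glb_Rbar_correct (fun l => 0 < l /\ F (t + l) - F (t - l) >= beta)) as [_ Hglb].
  destruct (Glb_Rbar _) as [r| |] eqn:E; simpl; try apply Rle_refl.
  apply (Hglb 0); intros l [Hl _]; simpl; lra.
Qed.

Section StrictCdf.

Variable F : R -> R.
Hypothesis F_strict : forall x y, x < y -> F x < F y.
Hypothesis F_lim_minf : is_lim F m_infty 0.
Hypothesis F_lim_pinf : is_lim F p_infty 1.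

Lemma strict_cdf_mono x y : x <= y -> F x <= F y.
Proof. intros [Hxy|<-]; [apply Rlt_le, F_strict, Hxy | apply Rle_refl]. Qed.

Lemma strict_cdf_le_1 x : F x <= 1.
Proof.
  apply (is_lim_le_loc (fun _ => F x) F p_infty (F x) 1);
    [|apply is_lim_const|exact F_lim_pinf].
  exists x; intros y Hy; apply strict_cdf_mono; lra.
Qed.

Lemma strict_cdf_ge_0 x : 0 <= F x.
Proof.
  apply (is_lim_le_loc F (fun _ => F x) m_infty 0 (F x));
    [|exact F_lim_minf|apply is_lim_const].
  exists x; intros y Hy; apply strict_cdf_mono; lra.
Qed.

Lemma is_lim_spread (t : R) :
  is_lim (fun l => F (t + l) - F (t - l)) p_infty 1.
Proof.
  apply (is_lim_minus _ _ _ 1 0).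
  - apply (is_lim_comp F (fun l => t + l) p_infty 1 p_infty F_lim_pinf).
    + apply (is_lim_plus _ _ _ t p_infty); [apply is_lim_const|apply is_lim_id|reflexivity].
    + exists 0; intros; discriminate.
  - apply (is_lim_comp F (fun l => t - l) p_infty 0 m_infty F_lim_minf).
    + apply (is_lim_minus _ _ _ t p_infty); [apply is_lim_const|apply is_lim_id|reflexivity].
    + exists 0; intros; discriminate.
  - unfold is_Rbar_minus, is_Rbar_plus; simpl; f_equal; f_equal; ring.
Qed.

Lemma lambda_beta_spec (beta t : R) : continuity F -> 0 < beta < 1 ->
  0 < lambda_beta F beta t /\
  F (t + lambda_beta F beta t) - F (t - lambda_beta F beta t) = beta.
Proof.
  intros F_cont Hbeta.
  set (G := fun l => F (t + l) - F (t - l)).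
  assert (G_strict : forall x y, x < y -> G x < G y).
  { intros x y Hxy; unfold G.
    pose proof (F_strict (t + x) (t + y)); pose proof (F_strict (t - y) (t - x)); lra. }
  assert (G_cont : continuity G).
  { intros l; apply continuity_pt_minus.
    - apply (continuity_pt_comp (fun l => t + l) F); [reg | apply F_cont].
    - apply (continuity_pt_comp (fun l => t - l) F); [reg | apply F_cont]. }
  destruct (proj2 (is_lim_spec _ _ _) (is_lim_spread t) (mkposreal (1 - beta) ltac:(lra)))
    as [M HM]; simpl in HM.
  set (L := Rmax M 0 + 1).
  assert (HL : 0 < L /\ beta < G L).
  { pose proof (Rmax_l M 0); pose proof (Rmax_r M 0).
    specialize (HM L ltac:(unfold L; lra)). split; [unfold L; lra|].
    unfold G; revert HM; split_Rabs; lra. }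
  assert (G0 : G 0 = 0) by (unfold G; rewrite Rplus_0_r, Rminus_0_r; ring).
  destruct (IVT_gen G 0 L beta G_cont) as [r [Hr HGr]].
  { rewrite G0, Rmin_left, Rmax_right; lra. }
  rewrite Rmin_left, Rmax_right in Hr by lra.
  assert (Hr0 : 0 < r) by (destruct Hr as [[Hr0|<-] _]; [exact Hr0|lra]).
  assert (Hlam : lambda_beta F beta t = r).
  { change (real (Glb_Rbar (fun l => 0 < l /\ G l >= beta)) = r).
    now rewrite (is_glb_Rbar_unique _ r (is_glb_Rbar_level_set G beta r G_strict Hr0 HGr)). }
  rewrite Hlam; split; [exact Hr0 | exact HGr].
Qed.

(* The defining set is empty, so its infimum is +oo and [real] maps it to 0. *)
Lemma lambda_beta_1 (t : R) : lambda_beta F 1 t = 0.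
Proof.
  unfold lambda_beta.
  rewrite (is_glb_Rbar_unique _ p_infty); [reflexivity|].
  split; [|intros b _; destruct b; simpl; auto].
  intros l [Hl Hspread]; exfalso.
  pose proof (strict_cdf_le_1 (t + l)); pose proof (strict_cdf_ge_0 (t - l - 1)).
  pose proof (F_strict (t - l - 1) (t - l)); lra.
Qed.

Lemma LD_S_1 (t : R) : LD_S 1 t F = 0.
Proof. unfold LD_S; rewrite lambda_beta_1, Rplus_0_r, Rminus_0_r; ring. Qed.

End StrictCdf.

Section SymmetricUnimodal.

Variable g : R -> R.
Hypothesis g_sym : forall s, g (- s) = g s.
Hypothesis g_unimodal : forall s u, 0 <= s -> s <= u -> g u <= g s.

Lemma symmetric_unimodal_Rabs (u v : R) : Rabs u <= Rabs v -> g v <= g u.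
Proof.
  assert (g_Rabs : forall x, g (Rabs x) = g x).
  { intros x; unfold Rabs; destruct (Rcase_abs x); [apply g_sym | reflexivity]. }
  intros Huv; rewrite <- (g_Rabs u), <- (g_Rabs v).
  apply g_unimodal; [apply Rabs_pos | exact Huv].
Qed.

Lemma symmetric_unimodal_pos (x l : R) : (forall y, 0 <= g y) ->
  0 <= l -> 0 < g (x + l) * g (x - l) -> 0 < g x.
Proof.
  intros g_nonneg Hl Hprod.
  pose proof (g_nonneg (x + l)); pose proof (g_nonneg (x - l)).
  destruct (Rle_or_lt 0 x).
  - assert (g (x + l) <= g x) by (apply symmetric_unimodal_Rabs; split_Rabs; lra).
    nra.
  - assert (g (x - l) <= g x) by (apply symmetric_unimodal_Rabs; split_Rabs; lra).
    nra.
Qed.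

Variable F : R -> R.
Hypothesis F_deriv : forall x, is_derive F x (g x).

Lemma upper_increment_le_lower (t l : R) : 0 <= t -> 0 <= l ->
  F (t + l) - F t <= F t - F (t - l).
Proof.
  intros Ht Hl.
  enough (Hsum : F (t + l) + F (t - l) <= F (t + 0) + F (t - 0))
    by (rewrite Rplus_0_r, Rminus_0_r in Hsum; lra).
  apply (is_derive_nonpos_le (fun x => F (t + x) + F (t - x))
           (fun x => g (t + x) - g (t - x)) 0 l Hl).
  - intros x _; apply is_derive_reflected_sum, F_deriv.
  - intros x Hx.
    assert (g (t + x) <= g (t - x)) by (apply symmetric_unimodal_Rabs; split_Rabs; lra).
    lra.
Qed.

Lemma lower_increment_le_upper (t l : R) : t <= 0 -> 0 <= l ->
  F t - F (t - l) <= F (t + l) - F t.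
Proof.
  intros Ht Hl.
  enough (Hsum : F (t + 0) + F (t - 0) <= F (t + l) + F (t - l))
    by (rewrite Rplus_0_r, Rminus_0_r in Hsum; lra).
  apply (is_derive_nonneg_le (fun x => F (t + x) + F (t - x))
           (fun x => g (t + x) - g (t - x)) 0 l Hl).
  - intros x _; apply is_derive_reflected_sum, F_deriv.
  - intros x Hx.
    assert (g (t - x) <= g (t + x)) by (apply symmetric_unimodal_Rabs; split_Rabs; lra).
    lra.
Qed.

End SymmetricUnimodal.

Definition upper_mass (F : R -> R) (beta t : R) : R := F (t + lambda_beta F beta t) - F t.

Section LocalDependence.

Variables (F g : R -> R) (beta : R).
Hypothesis F_deriv : forall x, is_derive F x (g x).
Hypothesis g_pos : forall x, 0 < g x.
Hypothesis g_sym : forall s, g (- s) = g s.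
Hypothesis g_unimodal : forall s u, 0 <= s -> s <= u -> g u <= g s.
Hypothesis beta_pos : 0 < beta.
Hypothesis lambda_level : forall t, 0 < lambda_beta F beta t /\
  F (t + lambda_beta F beta t) - F (t - lambda_beta F beta t) = beta.
Hypothesis g_ge_harmonic_mean : forall t,
  harmonic_mean (g (t + lambda_beta F beta t)) (g (t - lambda_beta F beta t)) <= g t.

Lemma upper_mass_antitone (s t : R) : s <= t -> upper_mass F beta t <= upper_mass F beta s.
Proof.
  intros Hst.
  apply (is_derive_nonpos_le (upper_mass F beta)
    (fun t => harmonic_mean (g (t + lambda_beta F beta t)) (g (t - lambda_beta F beta t))
              - g t)); [exact Hst | | ].
  - intros x _; apply (is_derive_upper_increment F g _ beta F_deriv g_pos).
    intros u; apply lambda_level.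
  - intros x _; pose proof (g_ge_harmonic_mean x); lra.
Qed.

Lemma LD_S_upper_mass (t : R) :
  LD_S beta t F = 2 / beta ^ 2 * (upper_mass F beta t * (beta - upper_mass F beta t)).
Proof.
  unfold LD_S, upper_mass; destruct (lambda_level t) as [_ Hlevel].
  now replace (F t - F (t - lambda_beta F beta t))
    with (beta - (F (t + lambda_beta F beta t) - F t)) by lra.
Qed.

Lemma LD_S_antitone_pos (s t : R) : 0 < s -> s <= t -> LD_S beta t F <= LD_S beta s F.
Proof.
  intros Hs Hst; rewrite !LD_S_upper_mass.
  apply Rmult_le_compat_l; [apply Rlt_le, Rdiv_lt_0_compat; [lra | apply pow_lt; lra]|].
  pose proof (upper_mass_antitone s t Hst).
  pose proof (upper_increment_le_lower g g_sym g_unimodal F F_deriv s (lambda_beta F beta s)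
                (Rlt_le _ _ Hs) (Rlt_le _ _ (proj1 (lambda_level s)))).
  pose proof (lambda_level s); unfold upper_mass in *; nra.
Qed.

Lemma LD_S_monotone_neg (s t : R) : s <= t -> t < 0 -> LD_S beta s F <= LD_S beta t F.
Proof.
  intros Hst Ht; rewrite !LD_S_upper_mass.
  apply Rmult_le_compat_l; [apply Rlt_le, Rdiv_lt_0_compat; [lra | apply pow_lt; lra]|].
  pose proof (upper_mass_antitone s t Hst).
  pose proof (lower_increment_le_upper g g_sym g_unimodal F F_deriv t (lambda_beta F beta t)
                (Rlt_le _ _ Ht) (Rlt_le _ _ (proj1 (lambda_level t)))).
  pose proof (lambda_level t); unfold upper_mass in *; nra.
Qed.

End LocalDependence.

Theorem mainTheorem11 (F g : R -> R) (beta : R)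
  (* F is the cdf of a real random variable X *)
  (F_mono : forall x y, x <= y -> F x <= F y)
  (F_lim_minf : is_lim F m_infty 0)
  (F_lim_pinf : is_lim F p_infty 1)
  (* F is C^1 with density g = F' *)
  (F_deriv : forall x, is_derive F x (g x))
  (g_cont : forall x, continuous g x)
  (* symmetric and unimodal about 0 *)
  (g_sym : forall s, g (- s) = g s)
  (g_unimodal : forall s u, 0 <= s -> s <= u -> g u <= g s)
  (Hbeta : 0 < beta <= 1)
  (Hpos : forall t, g (t + lambda_beta F beta t) * g (t - lambda_beta F beta t) > 0)
  (Hharm : forall t,
      g t >= 2 * (g (t + lambda_beta F beta t) * g (t - lambda_beta F beta t))
                 / (g (t + lambda_beta F beta t) + g (t - lambda_beta F beta t))) :
  (forall s t, 0 < s -> s <= t -> LD_S beta t F <= LD_S beta s F) /\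
  (forall s t, s <= t -> t < 0 -> LD_S beta s F <= LD_S beta t F).
Proof.
  assert (g_pos : forall x, 0 < g x).
  { intros x; apply (symmetric_unimodal_pos g g_sym g_unimodal x (lambda_beta F beta x)).
    - intros y; exact (is_derive_nonneg_of_incr F y (g y) F_mono (F_deriv y)).
    - apply lambda_beta_nonneg.
    - apply Hpos. }
  pose proof (strict_incr_of_is_derive_pos F g F_deriv g_pos) as F_strict.
  destruct Hbeta as [Hbeta0 [Hbeta1 | ->]].
  2:{ split; intros; rewrite !(LD_S_1 F F_strict F_lim_minf F_lim_pinf); lra. }
  assert (F_cont : continuity F).
  { intros x; apply derivable_continuous_pt; exists (g x); apply is_derive_Reals, F_deriv. }
  pose proof (fun t => lambda_beta_spec F F_strict F_lim_minf F_lim_pinf beta t F_cont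
                         (conj Hbeta0 Hbeta1)) as lambda_level.
  pose proof (fun t => Rge_le _ _ (Hharm t)) as g_ge_harmonic_mean.
  split.
  - exact (LD_S_antitone_pos F g beta F_deriv g_pos g_sym g_unimodal Hbeta0
             lambda_level g_ge_harmonic_mean).
  - exact (LD_S_monotone_neg F g beta F_deriv g_pos g_sym g_unimodal Hbeta0
             lambda_level g_ge_harmonic_mean).
Qed.
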